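(* For $x\in(0,1)$, the functions $f(k)=\sin\left(\frac{\pi}{2}x^k\right)^{1/k}$, $g(k)=\tan\left(\frac{\pi}{2}x^k\right)^{1/k}$ and $h(k)=\sinh(x^k)^{1/k}$ are decreasing on $(0,\infty)$. In particular, for $k\ge1$, $$\sqrt[k]{\sin\left(\tfrac{\pi}{2}x^k\right)}\le\sin\left(\tfrac{\pi}{2}x\right)\le\sin\left(\tfrac{\pi}{2}\sqrt[k]{x}\right)^k,\qquad \sqrt[k]{\tan\left(\tfrac{\pi}{2}x^k\right)}\le\tan\left(\tfrac{\pi}{2}x\right)\le\tan\left(\tfrac{\pi}{2}\sqrt[k]{x}\right)^k,$$ $$\sqrt[k]{\sinh(x^k)}\le\sinh(x)\le\sinh(\sqrt[k]{x})^k.$$ *)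

From Stdlib Require Export Reals.
Open Scope R_scope.

Definition rpow (a b : R) : R := Rpower a b.

Definition f_sin (x k : R) : R := rpow (sin (PI / 2 * rpow x k)) (1 / k).
Definition g_tan (x k : R) : R := rpow (tan (PI / 2 * rpow x k)) (1 / k).
Definition h_sinh (x k : R) : R := rpow (sinh (rpow x k)) (1 / k).

Definition strict_decr_pos (F : R -> R) : Prop :=
  forall a b, 0 < a -> a < b -> F b < F a.

(* Put [G s = ln (phi (exp s))], so that [phi (x^k)^(1/k) = exp (G (k ln x) / k)].
   Decrease in [k] amounts to [G (t s) < t G s] for [s < 0 < 1 < t].  For [sin],
   [G] is concave with [G 0 = 0]: its derivative is [w / tan w] with [w = pi/2 e^s],
   and [tan w / w] increases.  For [tan] and [sinh], [G s = s + ln (phi y / y)] with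
   [y = e^s], and the last term is positive and increasing in [s], because
   [phi y / y > 1] is the chord slope of a convex function vanishing at [0]. *)
From Stdlib Require Import Reals Lra.
From Coquelicot Require Import Coquelicot.
Open Scope R_scope.

Lemma increasing_of_derive_pos (f f' : R -> R) a b : a < b ->
  (forall c, a <= c <= b -> is_derive f c (f' c)) ->
  (forall c, a < c < b -> 0 < f' c) -> f a < f b.
Proof.
  intros Hab Hd Hpos.
  destruct (MVT_cor2 f f' a b Hab) as [c [Hc Hcab]].
  { intros c Hc; apply is_derive_Reals, Hd, Hc. }
  specialize (Hpos c Hcab). nra.
Qed.

Lemma id_lt_of_derive_gt_1 (f f' : R -> R) a : 0 < a -> f 0 = 0 ->
  (forall c, 0 <= c <= a -> is_derive f c (f' c)) ->
  (forall c, 0 < c < a -> 1 < f' c) -> a < f a.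
Proof.
  intros Ha Hf0 Hd Hgt.
  enough (f 0 - 0 < f a - a) by lra.
  apply (increasing_of_derive_pos (fun y => f y - y) (fun y => f' y - 1)); trivial.
  - intros c Hc. apply (is_derive_minus f (fun y => y));
      [now apply Hd | apply (is_derive_id (K := R_AbsRing))].
  - intros c Hc. specialize (Hgt c Hc). lra.
Qed.

Lemma div_id_increasing_of_convex (f f' : R -> R) a b : 0 < a -> a < b -> f 0 = 0 ->
  (forall c, 0 <= c <= b -> is_derive f c (f' c)) ->
  (forall c d, 0 < c -> c < d -> d < b -> f' c < f' d) ->
  f a / a < f b / b.
Proof.
  intros Ha Hab Hf0 Hd Hmono.
  destruct (MVT_cor2 f f' 0 a Ha) as [c1 [Ec1 Hc1]].
  { intros c Hc; apply is_derive_Reals, Hd; lra. }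
  destruct (MVT_cor2 f f' a b Hab) as [c2 [Ec2 Hc2]].
  { intros c Hc; apply is_derive_Reals, Hd; lra. }
  assert (Hlt : f' c1 < f' c2) by (apply Hmono; lra).
  replace (f a / a) with (f' c1) by (replace (f a) with (f' c1 * a) by lra; field; lra).
  apply Rlt_div_r; nra.
Qed.

(* Two mean-value points [c1 < s < c2] give
   [t G s - G (t s) = (t - 1) (- s) (G' c1 - G' c2)]. *)
Lemma scaled_lt_of_concave (G G' : R -> R) s t : s < 0 -> 1 < t -> G 0 = 0 ->
  (forall c, t * s <= c <= 0 -> is_derive G c (G' c)) ->
  (forall c d, t * s < c -> c < d -> d < 0 -> G' d < G' c) ->
  G (t * s) < t * G s.
Proof.
  intros Hs Ht HG0 Hd Hmono.
  destruct (MVT_cor2 G G' (t * s) s ltac:(nra)) as [c1 [Ec1 Hc1]].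
  { intros c Hc; apply is_derive_Reals, Hd; lra. }
  destruct (MVT_cor2 G G' s 0 Hs) as [c2 [Ec2 Hc2]].
  { intros c Hc; apply is_derive_Reals, Hd; nra. }
  assert (Hlt : G' c2 < G' c1) by (apply Hmono; lra).
  assert (Gs : G s = G' c2 * s) by lra.
  assert (Gts : G (t * s) = G' c2 * s - G' c1 * (s - t * s)) by lra.
  rewrite Gts, Gs.
  assert (0 < (G' c1 - G' c2) * ((t - 1) * - s)) by (apply Rmult_lt_0_compat; nra).
  nra.
Qed.

(* [phi (y^t) < phi y ^ t] for [0 < y < 1 < t], in the coordinates [y = exp s]. *)
Definition power_dominated (phi : R -> R) : Prop :=
  forall s t, s < 0 -> 1 < t -> ln (phi (exp (t * s))) < t * ln (phi (exp s)).

Lemma exp_lt_1 s : s < 0 -> exp s < 1.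
Proof. intro Hs. rewrite <- exp_0. now apply exp_increasing. Qed.

Lemma power_dominated_of_div_id (phi : R -> R) :
  (forall y, 0 < y < 1 -> y < phi y) ->
  (forall y z, 0 < y -> y < z -> z < 1 -> phi y / y < phi z / z) ->
  power_dominated phi.
Proof.
  intros Hgt Hmono s t Hs Ht.
  assert (ln_split : forall r, r < 0 -> ln (phi (exp r)) = r + ln (phi (exp r) / exp r)).
  { intros r Hr.
    assert (Hy := exp_pos r). assert (Hphi := Hgt (exp r) (conj Hy (exp_lt_1 r Hr))).
    rewrite <- (ln_exp r) at 2. rewrite <- ln_mult by (try apply Rdiv_lt_0_compat; lra).
    f_equal. field. lra. }
  rewrite !ln_split by nra.
  set (y := exp s). set (z := exp (t * s)).
  assert (Hz : 0 < z) by apply exp_pos.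
  assert (Hzy : z < y) by (apply exp_increasing; nra).
  assert (Hy1 : y < 1) by (now apply exp_lt_1).
  assert (Hphiz := Hgt z ltac:(lra)). assert (Hphiy := Hgt y ltac:(lra)).
  assert (Lzy : ln (phi z / z) < ln (phi y / y)).
  { apply ln_increasing; [apply Rdiv_lt_0_compat; lra | now apply Hmono]. }
  assert (Ly : 0 < ln (phi y / y)).
  { rewrite <- ln_1. apply ln_increasing; [lra|]. apply Rlt_div_r; lra. }
  nra.
Qed.

Lemma strict_decr_root_of_power_dominated (phi : R -> R) x : 0 < x -> x < 1 ->
  power_dominated phi -> strict_decr_pos (fun k => rpow (phi (rpow x k)) (1 / k)).
Proof.
  intros Hx0 Hx1 Hphi a b Ha Hab.
  assert (Hu : ln x < 0) by (rewrite <- ln_1; now apply ln_increasing).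
  unfold rpow, Rpower. apply exp_increasing.
  assert (Hdom := Hphi (a * ln x) (b / a) ltac:(nra) ltac:(apply Rlt_div_r; lra)).
  replace (b / a * (a * ln x)) with (b * ln x) in Hdom by (field; lra).
  apply (Rmult_lt_reg_l b); [lra|].
  replace (b * (1 / b * ln (phi (exp (b * ln x))))) with (ln (phi (exp (b * ln x))))
    by (field; lra).
  replace (b * (1 / a * ln (phi (exp (a * ln x))))) with (b / a * ln (phi (exp (a * ln x))))
    by (field; lra).
  exact Hdom.
Qed.

Lemma root_bounds_of_strict_decr (phi : R -> R) x k : 0 < x -> 0 < phi x -> 1 <= k ->
  strict_decr_pos (fun j => rpow (phi (rpow x j)) (1 / j)) ->
  rpow (phi (rpow x k)) (1 / k) <= phi x /\ phi x <= rpow (phi (rpow x (1 / k))) k.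
Proof.
  intros Hx Hphi Hk Hdecr.
  assert (Hx1 : phi x = rpow (phi (rpow x 1)) (1 / 1)).
  { unfold rpow. rewrite Rpower_1 by lra. replace (1 / 1) with 1 by field.
    now rewrite Rpower_1. }
  rewrite Hx1. split.
  - destruct (Req_dec k 1) as [-> | Hk1]; [lra|].
    left. apply (Hdecr 1 k); lra.
  - destruct (Req_dec k 1) as [-> | Hk1]; [replace (1 / 1) with 1 by field; lra|].
    assert (Hlt := Hdecr (1 / k) 1 ltac:(apply Rdiv_lt_0_compat; lra)
                     ltac:(apply Rlt_div_l; lra)).
    cbv beta in Hlt. replace (1 / (1 / k)) with k in Hlt by (field; lra).
    lra.
Qed.

Lemma tan_div_id_increasing a b : 0 < a -> a < b -> b < PI / 2 -> tan a / a < tan b / b.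
Proof.
  intros Ha Hab Hb.
  apply (div_id_increasing_of_convex tan (fun c => tan c ^ 2 + 1)); trivial.
  - apply tan_0.
  - intros c Hc. apply is_derive_tan, Rgt_not_eq, cos_gt_0; lra.
  - intros c d Hc Hcd Hd.
    assert (Htan : tan c < tan d) by (apply tan_increasing; lra).
    assert (0 < tan c) by (apply tan_gt_0; lra).
    nra.
Qed.

Lemma id_lt_tan w : 0 < w -> w < PI / 2 -> w < tan w.
Proof.
  intros Hw Hw2.
  apply (id_lt_of_derive_gt_1 tan (fun c => tan c ^ 2 + 1)); trivial.
  - apply tan_0.
  - intros c Hc. apply is_derive_tan, Rgt_not_eq, cos_gt_0; lra.
  - intros c Hc. assert (0 < tan c) by (apply tan_gt_0; lra). nra.
Qed.

Lemma id_mul_cot_decreasing a b : 0 < a -> a < b -> b < PI / 2 ->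
  b * cos b / sin b < a * cos a / sin a.
Proof.
  intros Ha Hab Hb.
  assert (Hpi := PI_RGT_0).
  assert (inv_div_tan : forall w, 0 < w < PI / 2 -> w * cos w / sin w = / (tan w / w)).
  { intros w Hw.
    assert (0 < cos w) by (apply cos_gt_0; lra).
    assert (0 < sin w) by (apply sin_gt_0; lra).
    unfold tan. field. lra. }
  rewrite !inv_div_tan by lra.
  apply Rinv_0_lt_contravar; [|now apply tan_div_id_increasing].
  apply Rdiv_lt_0_compat; [apply tan_gt_0|]; lra.
Qed.

Lemma sinh_pos v : 0 < v -> 0 < sinh v.
Proof. intro Hv. rewrite <- sinh_0. now apply sinh_lt. Qed.

Lemma cosh_increasing a b : 0 <= a -> a < b -> cosh a < cosh b.
Proof.
  intros Ha Hab.
  apply (increasing_of_derive_pos cosh sinh); trivial.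
  - intros c _. apply is_derive_Reals, derivable_pt_lim_cosh.
  - intros c Hc. apply sinh_pos; lra.
Qed.

Lemma sinh_div_id_increasing a b : 0 < a -> a < b -> sinh a / a < sinh b / b.
Proof.
  intros Ha Hab.
  apply (div_id_increasing_of_convex sinh cosh); trivial.
  - apply sinh_0.
  - intros c _. apply is_derive_Reals, derivable_pt_lim_sinh.
  - intros c d Hc Hcd _. apply cosh_increasing; lra.
Qed.

Lemma id_lt_sinh v : 0 < v -> v < sinh v.
Proof.
  intro Hv.
  apply (id_lt_of_derive_gt_1 sinh cosh); trivial.
  - apply sinh_0.
  - intros c _. apply is_derive_Reals, derivable_pt_lim_sinh.
  - intros c Hc. rewrite <- cosh_0. apply cosh_increasing; lra.
Qed.

Lemma power_dominated_sin : power_dominated (fun y => sin (PI / 2 * y)).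
Proof.
  intros s t Hs Ht.
  assert (Hpi := PI2_3_2).
  apply (scaled_lt_of_concave (fun s => ln (sin (PI / 2 * exp s)))
           (fun s => PI / 2 * exp s * cos (PI / 2 * exp s) / sin (PI / 2 * exp s)));
    trivial.
  - cbv beta. rewrite exp_0, Rmult_1_r, sin_PI2. apply ln_1.
  - intros c Hc.
    assert (Hw : 0 < PI / 2 * exp c <= PI / 2).
    { assert (0 < exp c) by apply exp_pos.
      split; [nra|].
      destruct (Rle_lt_or_eq_dec c 0 (proj2 Hc)) as [Hc0 | ->].
      - assert (exp c < 1) by now apply exp_lt_1. nra.
      - rewrite exp_0; lra. }
    assert (0 < sin (PI / 2 * exp c)) by (apply sin_gt_0; lra).
    auto_derive; [lra | field; lra].
  - intros c d Hc Hcd Hd.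
    assert (exp c < exp d) by now apply exp_increasing.
    assert (0 < exp c) by apply exp_pos.
    assert (exp d < 1) by now apply exp_lt_1.
    apply id_mul_cot_decreasing; nra.
Qed.

Lemma power_dominated_tan : power_dominated (fun y => tan (PI / 2 * y)).
Proof.
  assert (Hpi := PI2_3_2).
  apply power_dominated_of_div_id.
  - intros y Hy. apply (Rlt_trans _ (PI / 2 * y)); [nra | apply id_lt_tan; nra].
  - intros y z Hy Hyz Hz.
    assert (scale : forall v, 0 < v -> tan (PI / 2 * v) / v
                                       = PI / 2 * (tan (PI / 2 * v) / (PI / 2 * v))).
    { intros v Hv. field. lra. }
    rewrite !scale by lra.
    apply Rmult_lt_compat_l; [lra | apply tan_div_id_increasing; nra].
Qed.

Lemma power_dominated_sinh : power_dominated sinh.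
Proof.
  apply power_dominated_of_div_id.
  - intros y Hy. apply id_lt_sinh; lra.
  - intros y z Hy Hyz _. now apply sinh_div_id_increasing.
Qed.

Theorem lemma4p10 (x : R) (hx0 : 0 < x) (hx1 : x < 1) :
  strict_decr_pos (f_sin x) /\ strict_decr_pos (g_tan x) /\ strict_decr_pos (h_sinh x) /\
  (forall k : R, 1 <= k ->
     rpow (sin (PI / 2 * rpow x k)) (1 / k) <= sin (PI / 2 * x) /\
     sin (PI / 2 * x) <= rpow (sin (PI / 2 * rpow x (1 / k))) k /\
     rpow (tan (PI / 2 * rpow x k)) (1 / k) <= tan (PI / 2 * x) /\
     tan (PI / 2 * x) <= rpow (tan (PI / 2 * rpow x (1 / k))) k /\
     rpow (sinh (rpow x k)) (1 / k) <= sinh x /\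
     sinh x <= rpow (sinh (rpow x (1 / k))) k).
Proof.
  assert (Hpi := PI2_3_2).
  assert (Dsin := strict_decr_root_of_power_dominated _ x hx0 hx1 power_dominated_sin).
  assert (Dtan := strict_decr_root_of_power_dominated _ x hx0 hx1 power_dominated_tan).
  assert (Dsinh := strict_decr_root_of_power_dominated _ x hx0 hx1 power_dominated_sinh).
  split; [exact Dsin|]. split; [exact Dtan|]. split; [exact Dsinh|].
  intros k Hk.
  destruct (root_bounds_of_strict_decr (fun y => sin (PI / 2 * y)) x k hx0
             ltac:(apply sin_gt_0; nra) Hk Dsin) as [Sin1 Sin2].
  destruct (root_bounds_of_strict_decr (fun y => tan (PI / 2 * y)) x k hx0
             ltac:(apply tan_gt_0; nra) Hk Dtan) as [Tan1 Tan2].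
  destruct (root_bounds_of_strict_decr sinh x k hx0 (sinh_pos x hx0) Hk Dsinh)
    as [Sinh1 Sinh2].
  repeat split; assumption.
Qed.
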